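(* Let $n\ge 1$ and $k\ge 2$ be integers and let ${\boldsymbol A}\in\mathbb{R}^{n\times n}$ be a symmetric matrix. Let ${\boldsymbol\sigma}=({\boldsymbol\sigma}_1,\dots,{\boldsymbol\sigma}_n)$ be a local maximum of $F_{\boldsymbol A}({\boldsymbol\sigma})=\sum_{i,j=1}^n A_{ij}\langle{\boldsymbol\sigma}_i,{\boldsymbol\sigma}_j\rangle$ over the manifold ${\sf S}(n,k)=\{({\boldsymbol\sigma}_1,\dots,{\boldsymbol\sigma}_n): {\boldsymbol\sigma}_i\in\mathbb{R}^k,\ \|{\boldsymbol\sigma}_i\|_2=1\ \forall i\}$. Then $$ {\sf SDP}({\boldsymbol A})\ \ge\ F_{\boldsymbol A}({\boldsymbol\sigma})\ \ge\ {\sf SDP}({\boldsymbol A})-\frac{8}{\sqrt{k}}\, n\,\|{\boldsymbol A}\|_2, $$ where ${\sf SDP}({\boldsymbol A})=\max\{\langle {\boldsymbol A},{\boldsymbol X}\rangle : {\boldsymbol X}\in\mathbb{R}^{n\times n},\ {\boldsymbol X}\succeq 0,\ X_{ii}=1\ \forall i\in[n]\}$.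
   Context: $\langle{\boldsymbol A},{\boldsymbol B}\rangle={\rm Tr}({\boldsymbol A}^{\sf T}{\boldsymbol B})$ is the matrix scalar product; $\|{\boldsymbol A}\|_2$ is the $\ell_2$ operator norm of ${\boldsymbol A}$. ${\sf S}(n,k)$ is identified with the set of $n\times k$ real matrices whose rows are unit vectors (a product of $n$ copies of the sphere ${\sf S}^{k-1}$), and ''local maximum'' refers to this manifold structure. *)

From HB Require Import structures.
From mathcomp Require Import all_boot all_order all_algebra.
From mathcomp Require Import classical_sets reals.
Set Implicit Arguments. Unset Strict Implicit. Unset Printing Implicit Defensive.
Import Order.TTheory GRing.Theory Num.Theory.
Local Open Scope ring_scope.
Local Open Scope classical_set_scope.

Section Defs.
Variable R : realType.

Definition mxdot (m p : nat) (A B : 'M[R]_(m, p)) : R := \tr (A^T *m B).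

Definition vnorm (n : nat) (v : 'cV[R]_n) : R := Num.sqrt (\sum_i v i 0 ^+ 2).

Definition opnorm2 (n : nat) (A : 'M[R]_n) : R :=
  sup [set r | exists v : 'cV[R]_n, vnorm v = 1 /\ r = vnorm (A *m v)].

Definition psd (n : nat) (X : 'M[R]_n) : Prop :=
  X^T = X /\ forall v : 'cV[R]_n, 0 <= (v^T *m X *m v) 0 0.

Definition SDP (n : nat) (A : 'M[R]_n) : R :=
  sup [set r | exists X : 'M[R]_n,
        psd X /\ (forall i, X i i = 1) /\ r = mxdot A X].

Definition onSnk (n k : nat) (s : 'M[R]_(n, k)) : Prop :=
  forall i, \sum_l s i l ^+ 2 = 1.

Definition FA (n k : nat) (A : 'M[R]_n) (s : 'M[R]_(n, k)) : R :=
  \sum_i \sum_j A i j * (\sum_l s i l * s j l).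

(* local maximum of F_A on S(n,k) w.r.t. the subspace topology of R^{n x k}
   (entrywise sup-distance neighbourhoods) *)
Definition local_max_Snk (n k : nat) (A : 'M[R]_n) (s : 'M[R]_(n, k)) : Prop :=
  onSnk s /\
  exists eps : R, 0 < eps /\
    forall t : 'M[R]_(n, k), onSnk t ->
      (forall i l, `|t i l - s i l| < eps) -> FA A t <= FA A s.
End Defs.

(* At a local maximum sigma, the second variation of F_A along every tangent direction
   u (u_i orthogonal to sigma_i) is nonpositive; following the curves [sphere_curve],
   which stay exactly on S(n,k), this reads [hess_form u <= 0].  Given a feasible X of
   the SDP, write X = Y Y^T and sum these inequalities over the directions
   u_i = Y_ib (e_a - sigma_ia sigma_i), for all a and b: this yields
     (k - 2) <A, X> + sum_ij A_ij X_ij <sigma_i, sigma_j>^2 <= (k - 1) F_A(sigma).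
   Both <A, X> and the Hadamard term are sums of quadratic forms of A over families of
   vectors whose squared norms add up to n, hence are bounded by n ||A||_2 in absolute
   value.  So F_A(sigma) >= <A, X> - 2 n ||A||_2 / (k - 1), and 2 / (k - 1) <= 8 / sqrt k. *)

From HB Require Import structures.
From mathcomp Require Import all_boot all_order all_algebra.
From mathcomp Require Import classical_sets reals.
From mathcomp Require Import ring lra.
Set Implicit Arguments.
Unset Strict Implicit.
Unset Printing Implicit Defensive.

Import Order.TTheory GRing.Theory Num.Theory.
Local Open Scope ring_scope.

Section RealField.
Variable R : realFieldType.

Lemma sum_mulr_delta n (f : 'I_n -> R) i : \sum_j f j * (j == i)%:R = f i.
Proof.
rewrite (bigD1 i) //= eqxx mulr1 big1 ?addr0 // => j /negbTE ->; exact: mulr0.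
Qed.

Lemma sum_delta_mulr n (f : 'I_n -> R) i : \sum_j (j == i)%:R * f j = f i.
Proof. by rewrite -[RHS](sum_mulr_delta f i); apply: eq_bigr => j _; rewrite mulrC. Qed.

Lemma sum_pair_mul (I J : finType) (f : I -> R) (g : J -> R) :
  \sum_(p : I * J) f p.1 * g p.2 = (\sum_i f i) * (\sum_j g j).
Proof. by rewrite big_distrlr pair_bigA. Qed.

Lemma ler_sum_term (I : finType) (f : I -> R) j :
  (forall i, 0 <= f i) -> f j <= \sum_i f i.
Proof. by move=> f0; rewrite (bigD1 j) //= lerDl; exact: sumr_ge0. Qed.

Lemma sum_mul_sqr_le (I : finType) (a b : I -> R) :
  \sum_i a i ^+ 2 = 1 -> (\sum_i a i * b i) ^+ 2 <= \sum_i b i ^+ 2.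
Proof.
move=> a1; set c := \sum_i a i * b i.
have : 0 <= \sum_i (b i - c * a i) ^+ 2 by apply: sumr_ge0 => i _; exact: sqr_ge0.
suff -> : \sum_i (b i - c * a i) ^+ 2 = \sum_i b i ^+ 2 - c ^+ 2 by rewrite subr_ge0.
transitivity (\sum_i b i ^+ 2 - 2 * c * (\sum_i a i * b i) + c ^+ 2 * \sum_i a i ^+ 2).
  rewrite [2 * c * _]mulr_sumr [c ^+ 2 * _]mulr_sumr -sumrB -big_split /=.
  by apply: eq_bigr => i _; ring.
rewrite a1 -/c; ring.
Qed.

Lemma ler_sub_div (b x : R) : 1 <= x -> b - b / x <= `|b| * (x - 1).
Proof.
move=> x1; have x0 : 0 < x by lra.
have -> : b - b / x = b * (x - 1) / x by field; rewrite gt_eqF.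
rewrite ler_pdivrMr //.
have h : 0 <= `|b| * (x - 1) by rewrite mulr_ge0 ?normr_ge0 ?subr_ge0.
have := ler_norm b; nra.
Qed.

Lemma sub_div_dens_le (b x y al t : R) : 0 <= x <= al -> 0 <= y <= al -> 0 < t < 1 ->
  b - b / ((1 + t ^+ 2 * x) * (1 + t ^+ 2 * y)) <= `|b| * ((2 * al + al ^+ 2) * t).
Proof.
move=> /andP [x0 xal] /andP [y0 yal] /andP [t0 t1].
have sq_le c : 0 <= c -> c <= al -> t ^+ 2 * c <= t * al.
  move=> c0 cal; apply: le_trans (_ : t * c <= _); last by rewrite ler_pM2l.
  by rewrite expr2 -mulrA ler_piMl ?(ltW t1) // mulr_ge0 // ltW.
have xt := sq_le _ x0 xal; have yt := sq_le _ y0 yal.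
have xt0 := mulr_ge0 (sqr_ge0 t) x0; have yt0 := mulr_ge0 (sqr_ge0 t) y0.
move: xt yt xt0 yt0; set x' := t ^+ 2 * x; set y' := t ^+ 2 * y => xt yt xt0 yt0.
have d1 : 1 <= (1 + x') * (1 + y') by nra.
apply: le_trans (ler_sub_div _ d1) _; apply: ler_wpM2l; first exact: normr_ge0.
have xy : x' * y' <= t * al * (t * al) by apply: ler_pM.
have t1' : 0 <= 1 - t by lra.
have := mulr_ge0 (mulr_ge0 (ltW t0) (sqr_ge0 al)) t1'; nra.
Qed.

Lemma le0_of_forall_small (q c d : R) :
  0 < d -> (forall t, 0 < t -> t < d -> q <= c * t) -> q <= 0.
Proof.
move=> d0 small; rewrite leNgt; apply/negP => q0.
pose t := Order.min (d / 2) (q / (2 * (`|c| + 1))).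
have c1 : 0 < `|c| + 1 by have := normr_ge0 c; lra.
have t0 : 0 < t by rewrite lt_min !divr_gt0 //; lra.
have td : t < d by rewrite gt_min; apply/orP; left; lra.
have : t <= q / (2 * (`|c| + 1)) by rewrite ge_min lexx orbT.
rewrite ler_pdivlMr ?pmulr_rgt0 //.
have := small t t0 td; have := ler_norm c; have := normr_ge0 c; nra.
Qed.

End RealField.

Section PositiveSemidefinite.
Variables (R : realType) (n : nat).
Implicit Types (X : 'M[R]_n) (v w : 'I_n -> R).

Definition bform X v w := \sum_a \sum_b v a * X a b * w b.
Definition qform X v := bform X v v.

Lemma qform_mx X (v : 'cV[R]_n) : (v^T *m X *m v) 0 0 = qform X (fun i => v i 0).
Proof.
rewrite !mxE /qform /bform exchange_big; apply: eq_bigr => b _.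
by rewrite !mxE big_distrl; apply: eq_bigr => a _; rewrite !mxE.
Qed.

Lemma psd_qform_ge0 X v : psd X -> 0 <= qform X v.
Proof.
case=> _ /(_ (\col_i v i)); rewrite qform_mx.
by congr (_ <= _); apply: eq_bigr => a _; apply: eq_bigr => b _; rewrite !mxE.
Qed.

Lemma sym_mxE X a b : X^T = X -> X b a = X a b.
Proof. by move=> symX; rewrite -[in LHS]symX mxE. Qed.

Lemma bformC X v w : X^T = X -> bform X v w = bform X w v.
Proof.
move=> symX; rewrite /bform exchange_big; apply: eq_bigr => a _; apply: eq_bigr => b _.
by rewrite (sym_mxE a b symX); ring.
Qed.

Lemma qformDZ X v w t : X^T = X ->
  qform X (fun a => v a + t * w a) = qform X v + 2 * t * bform X v w + t ^+ 2 * qform X w.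
Proof.
move=> symX; transitivity (qform X v + t * bform X v w + t * bform X w v + t ^+ 2 * qform X w).
  rewrite /qform /bform !mulr_sumr -!big_split; apply: eq_bigr => a _.
  by rewrite !mulr_sumr -!big_split; apply: eq_bigr => b _ /=; ring.
by rewrite (bformC _ w) //; ring.
Qed.

Lemma bform_delta X v i : bform X v (fun b => (b == i)%:R) = \sum_a v a * X a i.
Proof. by apply: eq_bigr => a _; exact: sum_mulr_delta. Qed.

Lemma qform_delta X i : qform X (fun b => (b == i)%:R) = X i i.
Proof. by rewrite /qform bform_delta (sum_delta_mulr (fun a => X a i)). Qed.

Lemma psd_diag_ge0 X i : psd X -> 0 <= X i i.
Proof. by move=> psdX; rewrite -qform_delta; exact: psd_qform_ge0. Qed.

Lemma psd_diag_eq0 X i j : psd X -> X j j = 0 -> X i j = 0.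
Proof.
move=> psdX Xjj; apply/eqP/negPn/negP => Xij.
pose t := - (1 + X i i) / (2 * X i j).
have := psd_qform_ge0 (fun a => (a == i)%:R + t * (a == j)%:R) psdX.
rewrite qformDZ ?psdX.1 // !qform_delta bform_delta Xjj mulr0 addr0.
rewrite (sum_delta_mulr (fun a => X a j)).
have -> : X i i + 2 * t * X i j = -1 by rewrite /t; field.
lra.
Qed.

Lemma psd_schur X i : psd X -> 0 < X i i ->
  psd (\matrix_(a, b) (X a b - X a i * X b i / X i i)).
Proof.
move=> psdX Xii; have symX a b := sym_mxE a b psdX.1.
split=> [|v]; first by apply/matrixP => a b; rewrite !mxE symX; ring.
rewrite qform_mx; set B := \sum_a v a 0 * X a i.
have -> : qform (\matrix_(a, b) (X a b - X a i * X b i / X i i)) (fun a => v a 0) =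
    qform X (fun a => v a 0) - B ^+ 2 / X i i.
  rewrite /qform /bform expr2 /B big_distrl big_distrl -sumrB /=; apply: eq_bigr => a _.
  rewrite mulrAC mulr_sumr -sumrB; apply: eq_bigr => b _; rewrite !mxE symX; ring.
have := psd_qform_ge0 (fun a => v a 0 + (- B / X i i) * (a == i)%:R) psdX.
rewrite qformDZ ?psdX.1 // qform_delta bform_delta -/B.
suff -> : qform X (fun a => v a 0) + 2 * (- B / X i i) * B + (- B / X i i) ^+ 2 * X i i =
    qform X (fun a => v a 0) - B ^+ 2 / X i i by [].
by field; rewrite gt_eqF.
Qed.

Lemma psd_gram X : psd X ->
  exists m (Y : 'M[R]_(n, m)), forall a b, X a b = \sum_c Y a c * Y b c.
Proof.
(* Induction on the number of nonzero diagonal entries: a nonzero pivot [X i i] splits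
   off the rank-one term [X_.i X_.i^T / X i i], leaving the psd Schur complement. *)
have [N] := ubnP #|[pred a | X a a != 0]|; elim: N X => // N IH X suppX psdX.
case: (pickP [pred a | X a a != 0]) => [i /= Xi0 | X0]; last first.
  exists 0%N, 0 => a b; rewrite big_ord0; apply: psd_diag_eq0 => //.
  exact/eqP/negbFE/X0.
have Xii : 0 < X i i by rewrite lt_def Xi0 psd_diag_ge0.
pose S := \matrix_(a, b) (X a b - X a i * X b i / X i i).
have psdS : psd S by exact: psd_schur.
have suppS : (#|[pred a | S a a != 0%R]| < N)%N.
  rewrite -ltnS; apply: leq_trans suppX; apply: proper_card; apply/properP; split.
    apply/fintype.subsetP => a; rewrite !inE; apply: contraNN => /eqP Xaa.
    by rewrite mxE Xaa (sym_mxE i a psdX.1) (psd_diag_eq0 i psdX Xaa) !mul0r subr0.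
  by exists i; rewrite !inE // mxE negbK -expr2 -mulrA mulrCA divff ?mulr1 ?subrr ?lt0r_neq0.
have [m [Y SY]] := IH S suppS psdS.
have sqrtX : Num.sqrt (X i i) ^+ 2 = X i i by rewrite sqr_sqrtr // ltW.
exists (1 + m)%N, (row_mx (\col_a (X a i / Num.sqrt (X i i))) Y) => a b.
rewrite big_split_ord big_ord1 /= !row_mxEl !mxE.
under eq_bigr => c _ do rewrite !row_mxEr.
rewrite -SY mxE (sym_mxE i b psdX.1) mulrACA -invfM -expr2 sqrtX.
by field; rewrite lt0r_neq0.
Qed.

Lemma psd_mulmx_tr m (Y : 'M[R]_(n, m)) : psd (Y *m Y^T).
Proof.
split=> [|v]; first by rewrite trmx_mul trmxK.
rewrite mulmxA -mulmxA; set w := Y^T *m v.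
have -> : v^T *m Y = w^T by rewrite trmx_mul trmxK.
by rewrite mxE; apply: sumr_ge0 => l _; rewrite mxE -expr2 sqr_ge0.
Qed.

End PositiveSemidefinite.

Section OperatorNorm.
Variables (R : realType) (n : nat) (A : 'M[R]_n).

Lemma vnorm_eq1 (v : 'cV[R]_n) : vnorm v = 1 -> \sum_i v i 0 ^+ 2 = 1.
Proof.
move=> v1; rewrite -(expr1n _ 2) -v1 sqr_sqrtr //.
by apply: sumr_ge0 => i _; exact: sqr_ge0.
Qed.

Lemma opnorm2_ubound :
  has_ubound [set r | exists v : 'cV[R]_n, vnorm v = 1 /\ r = vnorm (A *m v)].
Proof.
exists (Num.sqrt (\sum_i \sum_j A i j ^+ 2)) => _ [v [/vnorm_eq1 v1 ->]].
apply: ler_wsqrtr; apply: ler_sum => i _; rewrite mxE.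
under eq_bigr do rewrite mulrC.
exact: sum_mul_sqr_le.
Qed.

Lemma vnorm_mulmx_le (v : 'cV[R]_n) : vnorm v = 1 -> vnorm (A *m v) <= opnorm2 A.
Proof. by move=> v1; apply: ub_le_sup; [exact: opnorm2_ubound | exists v]. Qed.

Lemma opnorm2_ge0 : (0 < n)%N -> 0 <= opnorm2 A.
Proof.
move=> n0; pose e : 'cV[R]_n := \col_i (i == Ordinal n0)%:R.
have e1 : vnorm e = 1.
  rewrite /vnorm (bigD1 (Ordinal n0)) //= big1 ?mxE ?eqxx ?expr1n ?addr0 ?sqrtr1 // => i.
  by rewrite mxE => /negbTE ->; rewrite expr0n.
exact: le_trans (sqrtr_ge0 _) (vnorm_mulmx_le e1).
Qed.

Lemma qform_le_opnorm2 (z : 'I_n -> R) : `|qform A z| <= opnorm2 A * \sum_i z i ^+ 2.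
Proof.
set s2 := \sum_i z i ^+ 2.
have s2_ge0 : 0 <= s2 by apply: sumr_ge0 => i _; exact: sqr_ge0.
have [s2_0 | s2_neq0] := eqVneq s2 0.
  have z0 i : z i = 0.
    apply/eqP; rewrite -sqrf_eq0 eq_le sqr_ge0 -s2_0 andbT.
    by apply: ler_sum_term => j; exact: sqr_ge0.
  rewrite s2_0 mulr0 /qform /bform big1 ?normr0 // => a _.
  by rewrite big1 // => b _; rewrite !z0 !mul0r.
set r := Num.sqrt s2.
have r0 : 0 < r by rewrite sqrtr_gt0 lt_def s2_neq0.
have rr : r ^+ 2 = s2 by rewrite sqr_sqrtr.
pose v : 'cV[R]_n := \col_i (z i / r).
have v1 : vnorm v = 1.
  rewrite /vnorm; under eq_bigr do rewrite mxE expr_div_n.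
  by rewrite -mulr_suml rr divff ?sqrtr1.
have -> : qform A z = s2 * \sum_i v i 0 * (A *m v) i 0.
  rewrite -rr /qform /bform mulr_sumr; apply: eq_bigr => a _.
  rewrite !mxE big_distrr /= mulr_sumr; apply: eq_bigr => b _; rewrite !mxE.
  by field; rewrite gt_eqF.
rewrite normrM ger0_norm // mulrC ler_pM2r ?lt_def ?s2_neq0 //.
apply: le_trans (vnorm_mulmx_le v1); rewrite -sqrtr_sqr; apply: ler_wsqrtr.
exact: sum_mul_sqr_le (vnorm_eq1 v1).
Qed.

Lemma gram_le_opnorm2 (I : finType) (z : I -> 'I_n -> R) :
  (forall i, \sum_c z c i ^+ 2 = 1) ->
  `|\sum_i \sum_j A i j * \sum_c z c i * z c j| <= n%:R * opnorm2 A.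
Proof.
move=> z1; have -> : \sum_i \sum_j A i j * \sum_c z c i * z c j = \sum_c qform A (z c).
  rewrite /qform /bform [RHS]exchange_big; apply: eq_bigr => i _.
  rewrite [RHS]exchange_big; apply: eq_bigr => j _; rewrite mulr_sumr.
  by apply: eq_bigr => c _; ring.
apply: le_trans (ler_norm_sum _ _ _) _.
apply: le_trans (ler_sum _ (fun c _ => qform_le_opnorm2 (z c))) _.
rewrite -mulr_sumr exchange_big /=.
under eq_bigr do rewrite z1.
by rewrite sumr_const card_ord -mulr_natl mulrC.
Qed.

End OperatorNorm.

Section SphereCurve.
Variables (R : realType) (n k : nat).
Implicit Types (s u : 'M[R]_(n, k)) (t : R).

Definition rowdot s u i j := \sum_l s i l * u j l.

(* Row [i] is the inverse stereographic projection, from the pole [- s_i], of the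
   point [t u_i]; when [u_i] is orthogonal to [s_i] it lies on the unit sphere and has
   velocity [2 u_i] at [t = 0]. *)
Definition sphere_curve s u t : 'M[R]_(n, k) :=
  \matrix_(i, l) (((1 - t ^+ 2 * rowdot u u i i) * s i l + 2 * t * u i l)
                   / (1 + t ^+ 2 * rowdot u u i i)).

Lemma rowdotC s u i j : rowdot s u i j = rowdot u s j i.
Proof. by apply: eq_bigr => l _; rewrite mulrC. Qed.

Lemma rowdot_ge0 u i : 0 <= rowdot u u i i.
Proof. by apply: sumr_ge0 => l _; rewrite -expr2 sqr_ge0. Qed.

Lemma rowdot_onSnk s i : onSnk s -> rowdot s s i i = 1.
Proof. by move=> ons; rewrite -(ons i); apply: eq_bigr => l _; rewrite expr2. Qed.

Lemma sphere_curve_den_gt0 u i t : 0 < 1 + t ^+ 2 * rowdot u u i i.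
Proof. by have := mulr_ge0 (sqr_ge0 t) (rowdot_ge0 u i); lra. Qed.

Lemma rowdot_sphere_curve s u t i j :
  rowdot (sphere_curve s u t) (sphere_curve s u t) i j =
  ((1 - t ^+ 2 * rowdot u u i i) * (1 - t ^+ 2 * rowdot u u j j) * rowdot s s i j
   + 2 * t * (1 - t ^+ 2 * rowdot u u i i) * rowdot s u i j
   + 2 * t * (1 - t ^+ 2 * rowdot u u j j) * rowdot u s i j
   + 4 * t ^+ 2 * rowdot u u i j)
  / ((1 + t ^+ 2 * rowdot u u i i) * (1 + t ^+ 2 * rowdot u u j j)).
Proof.
have di := sphere_curve_den_gt0 u i t; have dj := sphere_curve_den_gt0 u j t.
rewrite {1}/rowdot; under eq_bigr do rewrite !mxE.
move: di dj; move: (rowdot u u i i) (rowdot u u j j) => ai aj di dj.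
rewrite /rowdot !big_distrr -!big_split big_distrl; apply: eq_bigr => l _ /=.
by field; rewrite !gt_eqF.
Qed.

Lemma sphere_curve_onSnk s u t :
  onSnk s -> (forall i, rowdot s u i i = 0) -> onSnk (sphere_curve s u t).
Proof.
move=> ons tangent i.
have -> : \sum_l sphere_curve s u t i l ^+ 2 =
    rowdot (sphere_curve s u t) (sphere_curve s u t) i i.
  by apply: eq_bigr => l _; rewrite expr2.
rewrite rowdot_sphere_curve (rowdot_onSnk i ons) (rowdotC u) !tangent.
have := sphere_curve_den_gt0 u i t; move: (rowdot u u i i) => a di.
by field; rewrite gt_eqF.
Qed.

Lemma FA_sphere_curve (A : 'M[R]_n) s u t :
  FA A (sphere_curve s u t) + FA A (sphere_curve s u (- t)) - 2 * FA A s =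
  4 * t ^+ 2 * \sum_i \sum_j A i j *
    (2 * rowdot u u i j - (rowdot u u i i + rowdot u u j j) * rowdot s s i j)
    / ((1 + t ^+ 2 * rowdot u u i i) * (1 + t ^+ 2 * rowdot u u j j)).
Proof.
rewrite /FA mulr_sumr -big_split mulr_sumr -sumrB; apply: eq_bigr => i _.
rewrite mulr_sumr -big_split mulr_sumr -sumrB; apply: eq_bigr => j _ /=.
rewrite -![\sum_l _ * _]/(rowdot _ _ i j) !rowdot_sphere_curve sqrrN.
have di := sphere_curve_den_gt0 u i t; have dj := sphere_curve_den_gt0 u j t.
by field; rewrite !gt_eqF.
Qed.

Lemma sphere_curve_near s u t i l : onSnk s -> `|t| <= 1 ->
  `|sphere_curve s u t i l - s i l| <= 2 * `|t| * (rowdot u u i i + `|u i l|).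
Proof.
move=> ons t1; rewrite mxE.
have sil : `|s i l| <= 1.
  have := @ler_sum_term _ _ (fun j => s i j ^+ 2) l (fun j => sqr_ge0 _).
  by rewrite ons -real_normK ?num_real //; have := normr_ge0 (s i l); nra.
have di := sphere_curve_den_gt0 u i t; have a0 := rowdot_ge0 u i.
move: di a0; move: (rowdot u u i i) => a di a0.
have -> : ((1 - t ^+ 2 * a) * s i l + 2 * t * u i l) / (1 + t ^+ 2 * a) - s i l
    = (2 * t * u i l - 2 * t ^+ 2 * a * s i l) / (1 + t ^+ 2 * a).
  by field; rewrite gt_eqF.
rewrite normrM normfV (gtr0_norm di) ler_pdivrMr //.
apply: le_trans (ler_normB _ _) _.
rewrite !normrM !normr_nat (ger0_norm a0).
have ta : 0 <= `|t| * a by rewrite mulr_ge0 ?normr_ge0.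
have ts : `|t| * `|s i l| <= 1 by apply: mulr_ile1; rewrite ?normr_ge0.
have h1 : `|t| * `|t| * a * `|s i l| <= `|t| * a by nra.
have h2 := mulr_ge0 (mulr_ge0 (normr_ge0 t) (addr_ge0 a0 (normr_ge0 (u i l))))
  (mulr_ge0 (sqr_ge0 t) a0).
nra.
Qed.

Lemma sphere_curve_close s u eps : onSnk s -> 0 < eps ->
  exists2 d, 0 < d & forall t, `|t| < d -> forall i l, `|sphere_curve s u t i l - s i l| < eps.
Proof.
move=> ons eps0; pose al := \sum_i rowdot u u i i; pose be := \sum_i \sum_l `|u i l|.
have a_le i : rowdot u u i i <= al.
  by apply: (@ler_sum_term _ _ (fun i => rowdot u u i i)) => j; exact: rowdot_ge0.
have u_le i l : `|u i l| <= be.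
  apply: le_trans (@ler_sum_term _ _ (fun i => \sum_l `|u i l|) i _) => [|j].
    exact: (@ler_sum_term _ _ (fun l => `|u i l|)).
  exact: sumr_ge0.
have al0 : 0 <= al by apply: sumr_ge0 => i _; exact: rowdot_ge0.
have be0 : 0 <= be by apply: sumr_ge0 => i _; apply: sumr_ge0.
exists (Order.min 1 (eps / (2 * (al + be) + 1))) => [|t].
  by rewrite lt_min ltr01 divr_gt0 //; lra.
rewrite lt_min => /andP [t1 t_eps] i l.
apply: le_lt_trans (sphere_curve_near u i l ons (ltW t1)) _.
rewrite ltr_pdivlMr in t_eps; last lra.
have := a_le i; have := u_le i l; have := normr_ge0 t; nra.
Qed.

End SphereCurve.

Section SecondOrder.
Variables (R : realType) (n k : nat) (A : 'M[R]_n) (s : 'M[R]_(n, k)).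

(* [4 * hess_form u] is the second derivative of [F_A] along [sphere_curve s u] at [t = 0]. *)
Definition hess_form (u : 'M[R]_(n, k)) :=
  \sum_i \sum_j A i j *
    (2 * rowdot u u i j - (rowdot u u i i + rowdot u u j j) * rowdot s s i j).

Lemma hess_form_sum (I : finType) (u : I -> 'M[R]_(n, k)) :
  \sum_c hess_form (u c) =
  \sum_i \sum_j A i j * (2 * \sum_c rowdot (u c) (u c) i j
    - (\sum_c rowdot (u c) (u c) i i + \sum_c rowdot (u c) (u c) j j) * rowdot s s i j).
Proof.
rewrite exchange_big; apply: eq_bigr => i _; rewrite exchange_big; apply: eq_bigr => j _.
by rewrite -mulr_sumr sumrB -mulr_sumr -mulr_suml big_split.
Qed.

Hypothesis maxs : local_max_Snk A s.

Lemma local_max_hess_form_le0 u : (forall i, rowdot s u i i = 0) -> hess_form u <= 0.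
Proof.
move=> tangent; have [ons [eps [eps0 near_le]]] := maxs.
have [d d0 close] := sphere_curve_close u ons eps0.
pose B i j :=
  A i j * (2 * rowdot u u i j - (rowdot u u i i + rowdot u u j j) * rowdot s s i j).
pose den t i j := (1 + t ^+ 2 * rowdot u u i i) * (1 + t ^+ 2 * rowdot u u j j).
change (\sum_i \sum_j B i j <= 0).
pose al := \sum_i rowdot u u i i.
have a_bound i : 0 <= rowdot u u i i <= al.
  rewrite rowdot_ge0 /=.
  by apply: (@ler_sum_term _ _ (fun i => rowdot u u i i)) => j; exact: rowdot_ge0.
apply: (@le0_of_forall_small _ _ ((2 * al + al ^+ 2) * \sum_i \sum_j `|B i j|)
  (Order.min 1 d)); first by rewrite lt_min ltr01.
move=> t t0; rewrite lt_min => /andP [t1 td].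
have F_le tt : `|tt| = t -> FA A (sphere_curve s u tt) <= FA A s.
  move=> htt; apply: near_le; first exact: sphere_curve_onSnk.
  by apply: close; rewrite htt.
have H_le0 : \sum_i \sum_j B i j / den t i j <= 0.
  have t2 : 0 < 4 * t ^+ 2 by rewrite mulr_gt0 ?exprn_gt0.
  rewrite -(pmulr_rle0 _ t2).
  have <- : FA A (sphere_curve s u t) + FA A (sphere_curve s u (- t)) - 2 * FA A s =
      4 * t ^+ 2 * \sum_i \sum_j B i j / den t i j.
    exact: FA_sphere_curve.
  have := F_le t (gtr0_norm t0); have := F_le (- t) (etrans (normrN t) (gtr0_norm t0)).
  lra.
suff : \sum_i \sum_j B i j - \sum_i \sum_j B i j / den t i j
    <= (2 * al + al ^+ 2) * (\sum_i \sum_j `|B i j|) * t by lra.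
rewrite mulrAC mulrC mulr_suml -sumrB; apply: ler_sum => i _.
rewrite mulr_suml -sumrB; apply: ler_sum => j _.
by apply: sub_div_dens_le; rewrite ?a_bound ?t0.
Qed.

End SecondOrder.

Section TangentProjection.
Variables (R : realType) (n k : nat) (s : 'M[R]_(n, k)).
Hypothesis ons : onSnk s.

Definition tangent_proj (a : 'I_k) : 'M[R]_(n, k) :=
  \matrix_(i, l) ((l == a)%:R - s i a * s i l).

Lemma rowdot_tangent_proj a i : rowdot s (tangent_proj a) i i = 0.
Proof.
transitivity (\sum_l (l == a)%:R * s i l - s i a * \sum_l s i l ^+ 2).
  by rewrite mulr_sumr -sumrB; apply: eq_bigr => l _; rewrite mxE; ring.
by rewrite sum_delta_mulr ons; ring.
Qed.

Lemma sum_rowdot_tangent_proj i j :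
  \sum_a rowdot (tangent_proj a) (tangent_proj a) i j = k%:R - 2 + rowdot s s i j ^+ 2.
Proof.
transitivity (\sum_a (1 - s j a ^+ 2 - s i a ^+ 2 + s i a * s j a * rowdot s s i j)).
  apply: eq_bigr => a _; rewrite /rowdot.
  under eq_bigr do rewrite !mxE.
  transitivity (\sum_l ((l == a)%:R * (l == a)%:R - (l == a)%:R * (s j a * s j l)
    - (l == a)%:R * (s i a * s i l) + s i a * s j a * (s i l * s j l))).
    by apply: eq_bigr => l _; ring.
  by rewrite !big_split /= !sumrN !sum_delta_mulr -mulr_sumr eqxx /=; ring.
rewrite !big_split /= !sumrN sumr_const card_ord ons ons -mulr_suml -/(rowdot s s i j); ring.
Qed.

End TangentProjection.

Lemma mxdotE (R : realType) m p (A B : 'M[R]_(m, p)) :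
  mxdot A B = \sum_i \sum_j A i j * B i j.
Proof.
rewrite /mxdot /mxtrace exchange_big; apply: eq_bigr => j _; rewrite mxE.
by apply: eq_bigr => i _; rewrite mxE.
Qed.

Section LowerBound.
Variables (R : realType) (n k : nat) (A : 'M[R]_n) (s : 'M[R]_(n, k)).

Lemma sdp_feasible_le (X : 'M[R]_n) : psd X -> (forall i, X i i = 1) ->
  `|mxdot A X| <= n%:R * opnorm2 A.
Proof.
move=> psdX X1; have [m [Y XY]] := psd_gram psdX.
rewrite mxdotE; under eq_bigr do under eq_bigr do rewrite XY.
apply: gram_le_opnorm2 (fun c i => Y i c) _ => i.
by rewrite -(X1 i) XY; apply: eq_bigr => c _; rewrite expr2.
Qed.

Lemma sdp_feasible_hadamard_le (X : 'M[R]_n) :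
  onSnk s -> psd X -> (forall i, X i i = 1) ->
  `|\sum_i \sum_j A i j * (X i j * rowdot s s i j ^+ 2)| <= n%:R * opnorm2 A.
Proof.
move=> ons psdX X1; have [m [Y XY]] := psd_gram psdX.
pose z (c : 'I_m * ('I_k * 'I_k)) i := Y i c.1 * s i c.2.1 * s i c.2.2.
have zz i j : \sum_c z c i * z c j = X i j * rowdot s s i j ^+ 2.
  rewrite XY expr2 -!sum_pair_mul; apply: eq_bigr => c _; rewrite /z; ring.
under eq_bigr do under eq_bigr do rewrite -zz.
apply: gram_le_opnorm2 => i.
under eq_bigr do rewrite expr2.
by rewrite zz X1 rowdot_onSnk // expr1n mulr1.
Qed.

Lemma local_max_sdp_ineq (X : 'M[R]_n) :
  local_max_Snk A s -> psd X -> (forall i, X i i = 1) ->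
  (k%:R - 2) * mxdot A X + \sum_i \sum_j A i j * (X i j * rowdot s s i j ^+ 2)
    <= (k%:R - 1) * FA A s.
Proof.
move=> maxs psdX X1; have ons := maxs.1; have [m [Y XY]] := psd_gram psdX.
pose u (c : 'I_k * 'I_m) := \matrix_(i, l) (Y i c.2 * tangent_proj s c.1 i l).
have u_tangent c i : rowdot s (u c) i i = 0.
  transitivity (Y i c.2 * rowdot s (tangent_proj s c.1) i i).
    by rewrite /rowdot mulr_sumr; apply: eq_bigr => l _; rewrite mxE; ring.
  by rewrite rowdot_tangent_proj ?mulr0.
have sum_u i j : \sum_c rowdot (u c) (u c) i j = X i j * (k%:R - 2 + rowdot s s i j ^+ 2).
  rewrite XY -sum_rowdot_tangent_proj // mulrC -sum_pair_mul.
  apply: eq_bigr => c _; rewrite /rowdot mulr_suml.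
  by apply: eq_bigr => l _; rewrite !mxE; ring.
have : \sum_c hess_form A s (u c) <= 0.
  by apply: sumr_le0 => c _; exact: local_max_hess_form_le0.
rewrite hess_form_sum; under eq_bigr do under eq_bigr do rewrite !sum_u !X1 !rowdot_onSnk //.
suff -> : \sum_i \sum_j A i j * (2 * (X i j * (k%:R - 2 + rowdot s s i j ^+ 2))
    - (1 * (k%:R - 2 + 1 ^+ 2) + 1 * (k%:R - 2 + 1 ^+ 2)) * rowdot s s i j) =
  2 * ((k%:R - 2) * mxdot A X + \sum_i \sum_j A i j * (X i j * rowdot s s i j ^+ 2)
    - (k%:R - 1) * FA A s) by lra.
rewrite mxdotE /FA !mulr_sumr -big_split -sumrB mulr_sumr; apply: eq_bigr => i _ /=.
rewrite !mulr_sumr -big_split -sumrB mulr_sumr; apply: eq_bigr => j _ /=.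
rewrite -/(rowdot s s i j); ring.
Qed.

Lemma local_max_sdp_gap (X : 'M[R]_n) : (2 <= k)%N ->
  local_max_Snk A s -> psd X -> (forall i, X i i = 1) ->
  mxdot A X - 2 / (k%:R - 1) * (n%:R * opnorm2 A) <= FA A s.
Proof.
move=> k2 maxs psdX X1; have k1 : 1 < k%:R :> R by rewrite ltr1n.
have := local_max_sdp_ineq maxs psdX X1.
have := sdp_feasible_le psdX X1; have := sdp_feasible_hadamard_le maxs.1 psdX X1.
rewrite !ler_norml; move: (mxdot A X) (\sum_i \sum_j _) (n%:R * opnorm2 A) => P W T.
move=> /andP [W1 W2] /andP [P1 P2] ineq.
rewrite lerBlDr -lerBlDl mulrAC ler_pdivlMr ?subr_gt0 //; nra.
Qed.

Lemma FA_mxdot : FA A s = mxdot A (s *m s^T).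
Proof.
rewrite mxdotE; apply: eq_bigr => i _; apply: eq_bigr => j _; rewrite mxE.
by congr (_ * _); apply: eq_bigr => l _; rewrite mxE.
Qed.

Lemma gram_onSnk_diag i : onSnk s -> (s *m s^T) i i = 1.
Proof. by move=> ons; rewrite mxE -(ons i); apply: eq_bigr => l _; rewrite mxE expr2. Qed.

End LowerBound.

Lemma two_div_le_eight_div_sqrt (R : rcfType) (k : nat) : (2 <= k)%N ->
  2 / (k%:R - 1) <= 8 / Num.sqrt k%:R :> R.
Proof.
move=> k2; have K2 : 2 <= k%:R :> R by rewrite ler_nat.
have r0 : 0 < Num.sqrt k%:R :> R by rewrite sqrtr_gt0; lra.
have rK : Num.sqrt k%:R <= k%:R :> R.
  rewrite -{2}(sqr_sqrtr (ler0n R k)) expr2 ler_peMl ?sqrtr_ge0 //.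
  by rewrite -{1}sqrtr1; apply: ler_wsqrtr; lra.
rewrite ler_pdivrMr ?subr_gt0; last lra.
by rewrite mulrAC ler_pdivlMr //; nra.
Qed.

Theorem theorem1 (R : realType) (n k : nat) (A : 'M[R]_n) (s : 'M[R]_(n, k)) :
  (1 <= n)%N -> (2 <= k)%N -> A^T = A -> local_max_Snk A s ->
  FA A s <= SDP A /\
  SDP A - 8 / Num.sqrt (k%:R) * n%:R * opnorm2 A <= FA A s.
Proof.
move=> n1 k2 _ maxs; have ons := maxs.1.
have gram_s : psd (s *m s^T) /\ (forall i, (s *m s^T) i i = 1) /\
    FA A s = mxdot A (s *m s^T).
  split; first exact: psd_mulmx_tr.
  by split; [move=> i; exact: gram_onSnk_diag | exact: FA_mxdot].
split.
  apply: ub_le_sup; last by exists (s *m s^T).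
  exists (n%:R * opnorm2 A) => _ [X [psdX [X1 ->]]].
  by apply: le_trans (ler_norm _) _; exact: sdp_feasible_le.
rewrite lerBlDr -mulrA; apply: ge_sup; first by exists (FA A s), (s *m s^T).
move=> _ [X [psdX [X1 ->]]]; rewrite -lerBlDr.
apply: le_trans (local_max_sdp_gap k2 maxs psdX X1); rewrite lerB //.
rewrite ler_wpM2r ?two_div_le_eight_div_sqrt // mulr_ge0 // opnorm2_ge0 //.
Qed.
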